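(* Let $\mathbb{P}=\{(x,y)\in\mathbb{R}^2: x^2+y^2<1\}$ be the Poincaré disc model of the hyperbolic plane, with distance $d_{\mathbb{P}}(u,v)=\operatorname{arccosh}(1+\mathfrak{p}(u,v))$, where $\mathfrak{p}(u,v)=\frac{2\|u-v\|^2}{(1-\|u\|^2)(1-\|v\|^2)}$ and $\|\cdot\|$ is the Euclidean norm. Let $\lambda>0$, $\varepsilon>0$, and let $Q=Q(\lambda,\varepsilon)$ be the geodesic quadrilateral in $\mathbb{P}$ with vertices $(\pm a,\pm b)$ ($a,b>0$), where $a,b$ are chosen so that the hyperbolic distance between the midpoint of the upper side $U$ (from $(a,b)$ to $(-a,b)$) and the midpoint of the lower side $L$ (from $(a,-b)$ to $(-a,-b)$) is $\lambda$, and the hyperbolic distance between the midpoints of the other two sides (the left side and the right side) is $\varepsilon$. Then: (i) the unique shortest path in $Q$ from $L$ to $U$ is a segment of the $y$-axis; (ii) there exists $\alpha=\alpha(\lambda,\varepsilon)>0$ such that every path in $Q$ from $L$ to $U$ which meets either the left side or the right side of $Q$ has length at least $\lambda+\alpha$.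
   Context: In the Poincaré disc model the geodesics are the circular arcs (and diameters) orthogonal to the unit circle; a geodesic quadrilateral is the region bounded by four such geodesic segments. *)

From Stdlib Require Import Reals Lra.
Open Scope R_scope.

Definition pt : Type := (R * R)%type.
Definition sub (u v : pt) : pt := (fst u - fst v, snd u - snd v).
Definition nsq (u : pt) : R := fst u * fst u + snd u * snd u.

Definition in_disc (u : pt) : Prop := nsq u < 1.

Definition arccosh (x : R) : R := ln (x + sqrt (x * x - 1)).

Definition pfun (u v : pt) : R :=
  2 * nsq (sub u v) / ((1 - nsq u) * (1 - nsq v)).

Definition dP (u v : pt) : R := arccosh (1 + pfun u v).

(* A circle (center c, radius r) orthogonal to the unit circle:
   these carry the non-diametral geodesics of the disc. *)
Definition orth_circle (c : pt) (r : R) : Prop := 0 < r /\ nsq c = 1 + r * r.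
Definition on_circle (c : pt) (r : R) (z : pt) : Prop := nsq (sub z c) = r * r.

Definition on_geodesic (p q z : pt) : Prop :=
  exists c r, orth_circle c r /\ on_circle c r p /\ on_circle c r q /\ on_circle c r z.

(* z lies in the closed hyperbolic half-plane bounded by the geodesic through p q
   that contains the origin (outside of the orthogonal circle). *)
Definition halfplane (p q z : pt) : Prop :=
  forall c r, orth_circle c r -> on_circle c r p -> on_circle c r q ->
    r * r <= nsq (sub z c).

Definition vUR (a b : R) : pt := (a, b).
Definition vUL (a b : R) : pt := (- a, b).
Definition vLL (a b : R) : pt := (- a, - b).
Definition vLR (a b : R) : pt := (a, - b).

Definition quadQ (a b : R) (z : pt) : Prop :=
  in_disc z /\
  halfplane (vUR a b) (vUL a b) z /\ halfplane (vUL a b) (vLL a b) z /\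
  halfplane (vLL a b) (vLR a b) z /\ halfplane (vLR a b) (vUR a b) z.

Definition side (a b : R) (p q z : pt) : Prop := quadQ a b z /\ on_geodesic p q z.

Definition sideU (a b : R) := side a b (vUR a b) (vUL a b).
Definition sideL (a b : R) := side a b (vLR a b) (vLL a b).
Definition sideLeft (a b : R) := side a b (vUL a b) (vLL a b).
Definition sideRight (a b : R) := side a b (vUR a b) (vLR a b).

Definition hmid (a b : R) (p q m : pt) : Prop :=
  side a b p q m /\ dP p m = dP m q.

Definition cont01 (g : R -> pt) : Prop :=
  forall t, 0 <= t <= 1 -> forall e, 0 < e -> exists d, 0 < d /\
    forall s, 0 <= s <= 1 -> Rabs (s - t) < d -> nsq (sub (g s) (g t)) < e * e.

Definition partition (s : nat -> R) (n : nat) : Prop :=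
  s 0%nat = 0 /\ s n = 1 /\ forall i, (i < n)%nat -> s i <= s (S i).

Fixpoint chord_sum (g : R -> pt) (s : nat -> R) (n : nat) : R :=
  match n with
  | O => 0
  | S k => chord_sum g s k + dP (g (s k)) (g (s (S k)))
  end.

Definition has_length (g : R -> pt) (l : R) : Prop :=
  is_lub (fun x => exists s n, partition s n /\ x = chord_sum g s n) l.

Definition path_LU (a b : R) (g : R -> pt) : Prop :=
  cont01 g /\ (forall t, 0 <= t <= 1 -> quadQ a b (g t)) /\
  sideL a b (g 0) /\ sideU a b (g 1).

Definition shortest_LU (a b : R) (g : R -> pt) : Prop :=
  path_LU a b g /\ exists l, has_length g l /\
    forall g' l', path_LU a b g' -> has_length g' l' -> l <= l'.

From Stdlib Require Import Reals Lra Psatz Lia.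
Open Scope R_scope.

(* Lift the disc to the hyperboloid [X0^2 - X1^2 - X2^2 = 1] by
   [z |-> ((1+|z|^2), 2 z) / (1-|z|^2)]; then [cosh dP u v = 1 + pfun u v] is the Lorentz
   product of the lifts, and for a geodesic (an orthogonal circle) the reverse
   Cauchy-Schwarz inequality gives [cosh dP w z >= sqrt (1 + k^2)] for every [w] on it,
   where [k] is the signed [sinh] of the distance from [z] to the geodesic.
   For Q(a,b), let kL, kU be these quantities for the lines of L and U, and
   [T = cosh lambda].  An exact identity relates kL, kU, T and the lifted abscissa
   [hyp1 z]; together with the addition formula for arccosh it shows that any path from
   L to U through z has length at least [arccosh W(z)], where [W(z) >= T] always,
   [W(z)^2 >= T^2 + (T^2-1) hyp1(z)^2], and [W(z) = T] only on the axis segment joining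
   the midpoints of L and U.  The axis segment itself has length [arccosh T], which gives
   (i) (a shortest path must attain equality everywhere, and by continuity it sweeps the
   segment); on the left and right sides [hyp1] is bounded away from 0, which gives (ii). *)

Lemma acosh_le x y : 1 <= x -> x <= y -> arccosh x <= arccosh y.
Proof.
  intros h1 h2. unfold arccosh.
  assert (sqrt (x*x - 1) <= sqrt (y*y - 1)) by (apply sqrt_le_1_alt; nra).
  pose proof (sqrt_pos (x*x - 1)).
  destruct (Rle_lt_or_eq_dec _ _ h2) as [lt | ->]; [| lra].
  left; apply ln_increasing; lra.
Qed.

Lemma acosh_lt x y : 1 <= x -> x < y -> arccosh x < arccosh y.
Proof.
  intros h1 h2. unfold arccosh.
  assert (sqrt (x*x - 1) <= sqrt (y*y - 1)) by (apply sqrt_le_1_alt; nra).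
  pose proof (sqrt_pos (x*x - 1)).
  apply ln_increasing; lra.
Qed.

Lemma acosh_le_inv x y : 1 <= x -> 1 <= y -> arccosh x <= arccosh y -> x <= y.
Proof.
  intros hx hy h. destruct (Rle_or_lt x y) as [le | lt]; [exact le |].
  pose proof (acosh_lt y x hy lt). lra.
Qed.

Lemma acosh_add x y : 1 <= x -> 1 <= y ->
  arccosh x + arccosh y = arccosh (x*y + sqrt (x*x - 1) * sqrt (y*y - 1)).
Proof.
  intros hx hy. unfold arccosh.
  set (sx := sqrt (x*x - 1)). set (sy := sqrt (y*y - 1)).
  assert (hsx : sx*sx = x*x - 1) by (apply sqrt_sqrt; nra).
  assert (hsy : sy*sy = y*y - 1) by (apply sqrt_sqrt; nra).
  assert (0 <= sx) by apply sqrt_pos. assert (0 <= sy) by apply sqrt_pos.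
  rewrite <- ln_mult by nra. f_equal.
  assert (E : (x*y + sx*sy)*(x*y + sx*sy) - 1 = (x*sy + y*sx)*(x*sy + y*sx)) by nra.
  rewrite E, sqrt_square by nra. ring.
Qed.

Lemma acosh_inj x y : 1 <= x -> 1 <= y -> arccosh x = arccosh y -> x = y.
Proof. intros hx hy e. apply Rle_antisym; apply acosh_le_inv; lra. Qed.

(* [cosh (arsinh |k| + arsinh |l|)]: if [k], [l] are the [sinh] of the distances from a
   point to two geodesics, this is the [cosh] of the shortest broken path visiting both. *)
Definition cosh_sum (k l : R) : R :=
  sqrt (1 + k*k) * sqrt (1 + l*l) + Rabs k * Rabs l.

(* The algebraic heart of the estimate: under the identity satisfied by the two
   [sinh]-distances (see [sinh_identity]), [cosh_sum k l] dominates [T], with a quadratic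
   gain in [x], and equality forces [x = 0] and [k], [l] of the same sign. *)
Lemma cosh_sum_bound k l T x : 1 < T -> 0 <= x ->
  k*k + l*l + 2*T*(k*l) = (T*T - 1) * (1 + x) ->
  T <= cosh_sum k l /\ T*T + (T*T - 1) * x <= cosh_sum k l * cosh_sum k l /\
  (cosh_sum k l <= T -> x = 0 /\ 0 <= k*l).
Proof.
  intros hT hx hid. unfold cosh_sum.
  set (s := sqrt (1 + k*k) * sqrt (1 + l*l)). set (A := Rabs k * Rabs l).
  assert (hs : s*s = (1 + k*k) * (1 + l*l)).
  { unfold s. rewrite <- sqrt_mult_alt by nra. apply sqrt_sqrt. nra. }
  assert (s1 : 1 <= s).
  { assert (0 <= s) by (unfold s; apply Rmult_le_pos; apply sqrt_pos).
    destruct (Rle_or_lt 1 s) as [h | h]; [exact h | nra]. }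
  assert (hA : A = Rabs (k*l)) by (unfold A; rewrite Rabs_mult; reflexivity).
  assert (A0 : 0 <= A) by (rewrite hA; apply Rabs_pos).
  assert (Akl : k*l <= A) by (rewrite hA; apply Rle_abs).
  assert (AA : A*A = (k*l)*(k*l)) by (rewrite hA, <- Rabs_mult; apply Rabs_pos_eq; nra).
  assert (hW : (s + A)*(s + A) - 2*(s + A)*A - 1 = k*k + l*l) by nra.
  assert (TW : T <= s + A).
  { destruct (Rle_or_lt T (s + A)) as [h | h]; [exact h |].
    assert (0 <= (T*T - 1) * x) by (apply Rmult_le_pos; nra).
    assert (T*(k*l) <= T*A) by (apply Rmult_le_compat_l; lra).
    assert (T*T - 2*A*T - 1 - (k*k + l*l) <= 0) by nra.
    assert (0 < (T - (s + A)) * (T + (s + A) - 2*A)) by (apply Rmult_lt_0_compat; lra).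
    nra. }
  assert (M : (T*T - 1) * (1 + x) <= (s + A)*(s + A) - 1) by nra.
  split; [exact TW |]. split; [nra |].
  intros WT. assert (eqW : s + A = T) by lra. rewrite eqW in hW, M.
  assert (x0 : x = 0).
  { assert ((T*T - 1) * x <= 0) by nra.
    assert (0 <= (T*T - 1) * x) by (apply Rmult_le_pos; nra).
    assert (prod0 : (T*T - 1) * x = 0) by lra.
    apply Rmult_integral in prod0; destruct prod0; nra. }
  subst x. split; [reflexivity |].
  assert (T*A <= T*(k*l)) by nra.
  assert (A <= k*l) by (apply (Rmult_le_reg_l T); lra).
  lra.
Qed.

Lemma acosh_cosh_sum k l :
  arccosh (sqrt (1 + k*k)) + arccosh (sqrt (1 + l*l)) = arccosh (cosh_sum k l).
Proof.
  assert (sqrt_ge1 : forall u, 1 <= sqrt (1 + u*u)).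
  { intros u. rewrite <- sqrt_1 at 1. apply sqrt_le_1_alt. nra. }
  rewrite acosh_add by apply sqrt_ge1. unfold cosh_sum. f_equal. f_equal.
  rewrite !sqrt_sqrt by nra.
  replace (1 + k*k - 1) with (Rsqr k) by (unfold Rsqr; ring).
  replace (1 + l*l - 1) with (Rsqr l) by (unfold Rsqr; ring).
  rewrite !sqrt_Rsqr_abs. reflexivity.
Qed.
Lemma lorentz_orth_spacelike X0 X1 X2 V0 V1 V2 :
  X0*X0 - X1*X1 - X2*X2 = 1 -> X0*V0 - X1*V1 - X2*V2 = 0 ->
  V0*V0 - V1*V1 - V2*V2 <= 0.
Proof.
  intros hX hXV.
  assert (CS : (X0*V0) * (X0*V0) <= (X0*X0 - 1) * (V1*V1 + V2*V2)).
  { replace (X0*V0) with (X1*V1 + X2*V2) by lra.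
    replace (X0*X0 - 1) with (X1*X1 + X2*X2) by lra.
    pose proof (Rle_0_sqr (X1*V2 - X2*V1)); unfold Rsqr in *; nra. }
  assert (hV : 0 <= V1*V1 + V2*V2) by nra.
  assert (hX0 : 0 < X0*X0) by nra.
  apply (Rmult_le_reg_l (X0*X0)); nra.
Qed.

Lemma reverse_cauchy_schwarz X0 X1 X2 Y0 Y1 Y2 :
  X0*X0 - X1*X1 - X2*X2 = 1 ->
  Y0*Y0 - Y1*Y1 - Y2*Y2 <= (X0*Y0 - X1*Y1 - X2*Y2) * (X0*Y0 - X1*Y1 - X2*Y2).
Proof.
  intros hX. set (t := X0*Y0 - X1*Y1 - X2*Y2).
  assert (horth : X0*(Y0 - t*X0) - X1*(Y1 - t*X1) - X2*(Y2 - t*X2) = 0).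
  { transitivity (t - t*(X0*X0 - X1*X1 - X2*X2)); [unfold t; ring | rewrite hX; ring]. }
  pose proof (lorentz_orth_spacelike _ _ _ _ _ _ hX horth) as hV.
  assert (E : Y0*Y0 - Y1*Y1 - Y2*Y2 = t*t
     + ((Y0 - t*X0)*(Y0 - t*X0) - (Y1 - t*X1)*(Y1 - t*X1) - (Y2 - t*X2)*(Y2 - t*X2))).
  { transitivity (2*t*t - t*t*(X0*X0 - X1*X1 - X2*X2)
      + ((Y0 - t*X0)*(Y0 - t*X0) - (Y1 - t*X1)*(Y1 - t*X1) - (Y2 - t*X2)*(Y2 - t*X2)));
      [unfold t; ring | rewrite hX; ring]. }
  lra.
Qed.

(* The hyperboloid lift of the disc point [z]. *)
Definition hyp0 (z : pt) : R := (1 + nsq z) / (1 - nsq z).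
Definition hyp1 (z : pt) : R := 2 * fst z / (1 - nsq z).
Definition hyp2 (z : pt) : R := 2 * snd z / (1 - nsq z).

Lemma hyp_unit z : in_disc z ->
  hyp0 z * hyp0 z - hyp1 z * hyp1 z - hyp2 z * hyp2 z = 1.
Proof. unfold in_disc, hyp0, hyp1, hyp2, nsq; intros h. field; lra. Qed.

Lemma cosh_dP_lorentz u v : in_disc u -> in_disc v ->
  1 + pfun u v = hyp0 u * hyp0 v - hyp1 u * hyp1 v - hyp2 u * hyp2 v.
Proof.
  unfold in_disc, pfun, hyp0, hyp1, hyp2, nsq, sub; simpl; intros hu hv.
  field; split; lra.
Qed.

Lemma nsq_nonneg z : 0 <= nsq z.
Proof. unfold nsq; nra. Qed.

Lemma pfun_nonneg u v : in_disc u -> in_disc v -> 0 <= pfun u v.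
Proof.
  unfold in_disc, pfun; intros hu hv.
  pose proof (nsq_nonneg (sub u v)).
  apply Rmult_le_pos; [lra | apply Rlt_le, Rinv_0_lt_compat; nra].
Qed.

Lemma pfun_sym u v : pfun u v = pfun v u.
Proof.
  unfold pfun, nsq, sub; simpl. rewrite (Rmult_comm (1 - _)). f_equal. f_equal. ring.
Qed.

(* For an orthogonal circle [(c, r)], the [sinh] of the signed distance from [z] to the
   geodesic it carries: the Lorentz product of the lift of [z] with the unit normal
   [(1, c) / r] of the geodesic's plane. *)
Definition sinh_to_circle (c : pt) (r : R) (z : pt) : R :=
  (hyp0 z - fst c * hyp1 z - snd c * hyp2 z) / r.

(* Proof: project the lift of [z] onto the
   plane orthogonal to the normal and apply reverse Cauchy-Schwarz there. *)
Lemma cosh_dist_to_geodesic c r w z :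
  orth_circle c r -> on_circle c r w -> in_disc w -> in_disc z ->
  sqrt (1 + sinh_to_circle c r z * sinh_to_circle c r z) <= 1 + pfun w z.
Proof.
  destruct c as [c1 c2]. intros [hr hc] hw dw dz.
  unfold on_circle, nsq, sub in hw, hc; simpl in hw, hc. unfold in_disc in dw, dz.
  set (k := sinh_to_circle (c1, c2) r z).
  assert (hwn : hyp0 w - c1 * hyp1 w - c2 * hyp2 w = 0).
  { assert (num : 1 + nsq w - 2 * (c1 * fst w + c2 * snd w) = 0) by (unfold nsq; nra).
    unfold hyp0, hyp1, hyp2.
    replace (_ - _ - _) with ((1 + nsq w - 2 * (c1 * fst w + c2 * snd w)) / (1 - nsq w))
      by (field; unfold nsq; lra).
    rewrite num; field; unfold nsq; lra. }
  pose proof (reverse_cauchy_schwarz (hyp0 w) (hyp1 w) (hyp2 w)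
    (hyp0 z + k / r) (hyp1 z + k * c1 / r) (hyp2 z + k * c2 / r) (hyp_unit w dw)) as RCS.
  assert (hY : (hyp0 z + k / r) * (hyp0 z + k / r) - (hyp1 z + k * c1 / r) * (hyp1 z + k * c1 / r)
      - (hyp2 z + k * c2 / r) * (hyp2 z + k * c2 / r) = 1 + k * k).
  { assert (hkr : hyp0 z - c1 * hyp1 z - c2 * hyp2 z = k * r)
      by (unfold k, sinh_to_circle; simpl; field; lra).
    transitivity ((hyp0 z * hyp0 z - hyp1 z * hyp1 z - hyp2 z * hyp2 z)
      + 2 * (k / r) * (hyp0 z - c1 * hyp1 z - c2 * hyp2 z)
      + (k / r) * (k / r) * (1 - (c1 * c1 + c2 * c2))); [unfold Rdiv; ring |].
    rewrite hyp_unit, hkr, hc by assumption. field; lra. }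
  assert (hXY : hyp0 w * (hyp0 z + k / r) - hyp1 w * (hyp1 z + k * c1 / r)
      - hyp2 w * (hyp2 z + k * c2 / r) = 1 + pfun w z).
  { rewrite cosh_dP_lorentz by assumption.
    transitivity (hyp0 w * hyp0 z - hyp1 w * hyp1 z - hyp2 w * hyp2 z
      + k / r * (hyp0 w - c1 * hyp1 w - c2 * hyp2 w)); [field; lra | rewrite hwn; ring]. }
  rewrite hY, hXY in RCS.
  pose proof (pfun_nonneg w z dw dz).
  rewrite <- (sqrt_square (1 + pfun w z)) by lra.
  apply sqrt_le_1_alt. exact RCS.
Qed.

Lemma orth_circle_eq c r z : orth_circle c r -> on_circle c r z ->
  nsq z + 1 = 2 * (fst z * fst c + snd z * snd c).
Proof. unfold orth_circle, on_circle, nsq, sub; simpl. intros [_ hc] hz. nra. Qed.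

Lemma orth_circle_outside c r z : orth_circle c r ->
  2 * (fst z * fst c + snd z * snd c) <= nsq z + 1 -> r * r <= nsq (sub z c).
Proof. unfold orth_circle, nsq, sub; simpl. intros [_ hc] hz. nra. Qed.

(* [ctr p q] is the ordinate of the center of the orthogonal circle through
   [(p, q)] and [(-p, q)]; by symmetry [ctr q p] is the abscissa of the center of the
   one through [(p, q)] and [(p, -q)]. *)
Definition ctr (p q : R) : R := (1 + p*p + q*q) / (2*q).

Lemma ctr_opp p q : ctr p (- q) = - ctr p q.
Proof.
  unfold ctr, Rdiv. replace (2 * - q) with (- (2 * q)) by ring.
  rewrite Rinv_opp. ring.
Qed.

Lemma horizontal_circle p q c r : p <> 0 -> orth_circle c r ->
  on_circle c r (p, q) -> on_circle c r (- p, q) -> c = (0, ctr p q).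
Proof.
  intros hp ho h1 h2.
  pose proof (orth_circle_eq _ _ _ ho h1) as e1. pose proof (orth_circle_eq _ _ _ ho h2) as e2.
  unfold nsq in e1, e2; simpl in e1, e2.
  assert (hc1 : fst c = 0) by (apply (Rmult_eq_reg_l (4*p)); nra).
  rewrite hc1 in e1.
  assert (hq : q <> 0) by (intros ->; nra).
  destruct c as [c1 c2]; simpl in *. f_equal; [exact hc1 |].
  unfold ctr. apply (Rmult_eq_reg_r (2*q)); [field_simplify; lra | lra].
Qed.

Lemma vertical_circle p q c r : q <> 0 -> orth_circle c r ->
  on_circle c r (p, q) -> on_circle c r (p, - q) -> c = (ctr q p, 0).
Proof.
  intros hq ho h1 h2.
  pose proof (orth_circle_eq _ _ _ ho h1) as e1. pose proof (orth_circle_eq _ _ _ ho h2) as e2.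
  unfold nsq in e1, e2; simpl in e1, e2.
  assert (hc2 : snd c = 0) by (apply (Rmult_eq_reg_l (4*q)); nra).
  rewrite hc2 in e1.
  assert (hp : p <> 0) by (intros ->; nra).
  destruct c as [c1 c2]; simpl in *. f_equal; [| exact hc2].
  unfold ctr. apply (Rmult_eq_reg_r (2*p)); [field_simplify; lra | lra].
Qed.

Lemma horizontal_geodesic_eq p q z : p <> 0 ->
  on_geodesic (p, q) (- p, q) z -> nsq z + 1 = 2 * ctr p q * snd z.
Proof.
  intros hp (c & r & ho & h1 & h2 & hz).
  pose proof (orth_circle_eq _ _ _ ho hz) as e.
  rewrite (horizontal_circle p q c r hp ho h1 h2) in e; simpl in e. lra.
Qed.

Lemma vertical_geodesic_eq p q z : q <> 0 ->
  on_geodesic (p, q) (p, - q) z -> nsq z + 1 = 2 * ctr q p * fst z.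
Proof.
  intros hq (c & r & ho & h1 & h2 & hz).
  pose proof (orth_circle_eq _ _ _ ho hz) as e.
  rewrite (vertical_circle p q c r hq ho h1 h2) in e; simpl in e. lra.
Qed.

Definition horiz_radius (p q : R) : R := sqrt (ctr p q * ctr p q - 1).

Definition sinh_to_horizontal (p q : R) (z : pt) : R :=
  sinh_to_circle (0, ctr p q) (horiz_radius p q) z.

Lemma horizontal_cosh_bound p q w z : p <> 0 ->
  on_geodesic (p, q) (- p, q) w -> in_disc w -> in_disc z ->
  sqrt (1 + sinh_to_horizontal p q z * sinh_to_horizontal p q z) <= 1 + pfun w z.
Proof.
  intros hp (c & r & ho & h1 & h2 & hw) dw dz.
  pose proof (horizontal_circle p q c r hp ho h1 h2) as ->.
  assert (hr : r = horiz_radius p q).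
  { destruct ho as [r0 hc]. unfold nsq in hc; simpl in hc.
    unfold horiz_radius. rewrite <- (sqrt_square r) by lra. f_equal. lra. }
  subst r. exact (cosh_dist_to_geodesic _ _ w z ho hw dw dz).
Qed.

Lemma horiz_radius_opp p q : horiz_radius p (- q) = horiz_radius p q.
Proof. unfold horiz_radius. rewrite ctr_opp. f_equal. ring. Qed.

Lemma sinh_to_horizontal_axis p q y : y*y < 1 -> horiz_radius p q <> 0 ->
  sinh_to_horizontal p q (0, y) = (y*y - 2 * ctr p q * y + 1) / ((1 - y*y) * horiz_radius p q).
Proof.
  intros hy hr. unfold sinh_to_horizontal, sinh_to_circle, hyp0, hyp1, hyp2, nsq; simpl.
  field. split; [exact hr | lra].
Qed.

Lemma ctr_gt1 p q : 0 < p -> 0 < q -> p*p + q*q < 1 -> 1 < ctr p q.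
Proof.
  intros hp hq hpq. unfold ctr.
  apply (Rmult_lt_reg_r (2*q)); [lra |]. field_simplify; nra.
Qed.

Lemma equidistant_on_axis p q m : p <> 0 -> in_disc (p, q) -> in_disc m ->
  dP (p, q) m = dP m (- p, q) -> fst m = 0.
Proof.
  intros hp hpq hm e.
  assert (hpq' : in_disc (- p, q)) by (unfold in_disc, nsq in *; simpl in *; lra).
  pose proof (pfun_nonneg _ _ hpq hm). pose proof (pfun_nonneg _ _ hm hpq').
  apply acosh_inj in e; [| lra | lra].
  unfold pfun, in_disc, nsq, sub in *. destruct m as [x y]; simpl in *.
  assert (hnum : (p - x) * (p - x) + (q - y) * (q - y) = (x - - p) * (x - - p) + (y - q) * (y - q)).
  { set (D := (1 - (p*p + q*q)) * (1 - (x*x + y*y))).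
    assert (hD : 0 < D) by (unfold D; apply Rmult_lt_0_compat; lra).
    apply (Rmult_eq_reg_r (2 / D)); [| apply Rgt_not_eq, Rdiv_lt_0_compat; lra].
    replace (- p * - p) with (p * p) in e by ring.
    unfold D. rewrite (Rmult_comm (1 - (x*x + y*y))) in e. unfold Rdiv in *. lra. }
  apply (Rmult_eq_reg_l (4 * p)); [nra | lra].
Qed.

(* On the [y]-axis the hyperbolic distance is the difference of the potential
   [ln ((1+y)/(1-y))]. *)
Definition axis_potential (y : R) : R := ln ((1 + y) / (1 - y)).

Lemma axis_dist y1 y2 : -1 < y1 -> y1 <= y2 -> y2 < 1 ->
  dP (0, y1) (0, y2) = axis_potential y2 - axis_potential y1.
Proof.
  intros h1 h2 h3. unfold dP, axis_potential, arccosh.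
  set (E := ((1 + y2) * (1 - y1)) / ((1 - y2) * (1 + y1))).
  assert (E1 : 1 <= E).
  { unfold E. apply (Rmult_le_reg_r ((1 - y2) * (1 + y1))); [nra |]. field_simplify; nra. }
  assert (hX : 1 + pfun (0, y1) (0, y2) = (E + / E) / 2).
  { unfold E, pfun, nsq, sub; simpl. field. repeat split; nra. }
  assert (hinv : / E <= 1) by (rewrite <- Rinv_1; apply Rinv_le_contravar; lra).
  assert (hs : sqrt ((E + / E) / 2 * ((E + / E) / 2) - 1) = (E - / E) / 2).
  { replace ((E + / E) / 2 * ((E + / E) / 2) - 1) with ((E - / E) / 2 * ((E - / E) / 2))
      by (field; lra).
    apply sqrt_square. lra. }
  rewrite hX, hs. replace ((E + / E) / 2 + (E - / E) / 2) with E by (field; lra).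
  assert (q1 : 0 < (1 + y2) / (1 - y2)) by (apply Rdiv_lt_0_compat; lra).
  assert (q2 : 0 < (1 + y1) / (1 - y1)) by (apply Rdiv_lt_0_compat; lra).
  replace E with ((1 + y2) / (1 - y2) * / ((1 + y1) / (1 - y1)))
    by (unfold E; field; repeat split; lra).
  rewrite ln_mult, ln_Rinv; [ring | lra | lra | apply Rinv_0_lt_compat; lra].
Qed.

(* [clamp] extends a path on [0, 1] to all of R, as needed for the intermediate value
   theorem of the standard library. *)
Definition clamp (t : R) : R := Rmax 0 (Rmin 1 t).

Lemma clamp_range t : 0 <= clamp t <= 1.
Proof. unfold clamp, Rmax, Rmin. repeat destruct Rle_dec; lra. Qed.

Lemma clamp_mono s t : s <= t -> clamp s <= clamp t.
Proof. unfold clamp, Rmax, Rmin. repeat destruct Rle_dec; lra. Qed.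

Lemma clamp_lipschitz s t : Rabs (clamp s - clamp t) <= Rabs (s - t).
Proof.
  unfold clamp, Rmax, Rmin. repeat destruct Rle_dec; unfold Rabs; repeat destruct Rcase_abs; lra.
Qed.

Lemma clamp_id t : 0 <= t <= 1 -> clamp t = t.
Proof. unfold clamp, Rmax, Rmin. repeat destruct Rle_dec; lra. Qed.

Lemma cont01_snd_clamped g y : cont01 g -> continuity (fun t => snd (g (clamp t)) - y).
Proof.
  intros hc x0 e he.
  destruct (hc (clamp x0) (clamp_range x0) e he) as (d & hd & hclose).
  exists d. split; [exact hd |]. intros x [_ hx]. simpl in *. unfold R_dist in *.
  assert (h : Rabs (clamp x - clamp x0) < d) by (pose proof (clamp_lipschitz x x0); lra).
  specialize (hclose (clamp x) (clamp_range x) h). unfold nsq, sub in hclose; simpl in hclose.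
  set (u := snd (g (clamp x)) - snd (g (clamp x0))) in *.
  replace (snd (g (clamp x)) - y - (snd (g (clamp x0)) - y)) with u by (unfold u; ring).
  assert (u*u < e*e) by (pose proof (Rle_0_sqr (fst (g (clamp x)) - fst (g (clamp x0))));
    unfold Rsqr in *; lra).
  apply Rabs_def1; nra.
Qed.

Lemma hyp1_on_vertical e z : in_disc z -> nsq z + 1 = 2 * e * fst z ->
  1 / (e * e) <= hyp1 z * hyp1 z.
Proof.
  intros hz hl. unfold in_disc in hz. pose proof (nsq_nonneg z).
  set (n := nsq z) in *. set (x := fst z) in *.
  assert (h1 : 1 <= 4 * x * x * (e * e)) by nra.
  assert (he : 0 < e * e) by nra.
  assert (h2 : 1 / (e * e) <= 4 * x * x).
  { apply (Rmult_le_reg_r (e * e)); [exact he |]. field_simplify; nra. }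
  unfold hyp1. fold x n.
  replace (2 * x / (1 - n) * (2 * x / (1 - n))) with (4 * x * x / ((1 - n) * (1 - n)))
    by (field; lra).
  assert (4 * x * x <= 4 * x * x / ((1 - n) * (1 - n))).
  { apply (Rmult_le_reg_r ((1 - n) * (1 - n))); [nra |]. field_simplify; [nra | lra]. }
  lra.
Qed.

Section Quadrilateral.
Variables a b : R.
Hypotheses (ha : 0 < a) (hb : 0 < b) (hab : a*a + b*b < 1).

(* [mid_y] is the ordinate of the midpoint of U (that of L is [- mid_y]), and
   [cosh_lam] is [cosh] of the distance between them, i.e. [cosh lambda]. *)
Definition mid_y : R := ctr a b - horiz_radius a b.
Definition cosh_lam : R := 1 + 2 / (horiz_radius a b * horiz_radius a b).

Lemma ctrU_gt1 : 1 < ctr a b.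
Proof. exact (ctr_gt1 a b ha hb hab). Qed.

Lemma radius_sq : horiz_radius a b * horiz_radius a b = ctr a b * ctr a b - 1.
Proof. pose proof ctrU_gt1. apply sqrt_sqrt. nra. Qed.

Lemma radius_pos : 0 < horiz_radius a b.
Proof. pose proof ctrU_gt1. apply sqrt_lt_R0. nra. Qed.

Lemma mid_y_bounds : 0 < mid_y < 1.
Proof.
  pose proof ctrU_gt1. pose proof radius_sq. pose proof radius_pos.
  unfold mid_y. split; nra.
Qed.

Lemma cosh_lam_gt1 : 1 < cosh_lam.
Proof.
  pose proof radius_pos. unfold cosh_lam.
  assert (0 < 2 / (horiz_radius a b * horiz_radius a b)) by (apply Rdiv_lt_0_compat; nra).
  lra.
Qed.

(* The quadratic [t^2 - 2 ctr t + 1] has roots [mid_y] and [1/mid_y > 1]; it governs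
   both membership of [(0,t)] in U's geodesic and in its half-plane. *)
Lemma quad_factor t :
  t*t - 2 * ctr a b * t + 1 = (mid_y - t) * (ctr a b + horiz_radius a b - t).
Proof. pose proof radius_sq. unfold mid_y. nra. Qed.

Lemma quad_nonneg_iff t : t < 1 -> (0 <= t*t - 2 * ctr a b * t + 1 <-> t <= mid_y).
Proof.
  intros ht. pose proof ctrU_gt1. pose proof radius_pos.
  rewrite quad_factor. split; intros h; [| nra].
  destruct (Rle_or_lt t mid_y) as [le | lt]; [exact le | nra].
Qed.

Lemma quad_root t : t < 1 -> t*t - 2 * ctr a b * t + 1 = 0 -> t = mid_y.
Proof.
  intros ht h. pose proof ctrU_gt1. pose proof radius_pos.
  rewrite quad_factor in h. apply Rmult_integral in h. destruct h; lra.
Qed.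

Lemma sinh_identity z : in_disc z ->
  let kL := sinh_to_horizontal a (- b) z in let kU := sinh_to_horizontal a b z in
  kL*kL + kU*kU + 2 * cosh_lam * (kL*kU)
  = (cosh_lam * cosh_lam - 1) * (1 + hyp1 z * hyp1 z).
Proof.
  intros hz kL kU.
  assert (hkL : kL = (hyp0 z + ctr a b * hyp2 z) / horiz_radius a b).
  { unfold kL, sinh_to_horizontal, sinh_to_circle, horiz_radius. rewrite ctr_opp. simpl.
    replace (- ctr a b * - ctr a b) with (ctr a b * ctr a b) by ring.
    unfold Rdiv. ring. }
  assert (hkU : kU = (hyp0 z - ctr a b * hyp2 z) / horiz_radius a b).
  { unfold kU, sinh_to_horizontal, sinh_to_circle. simpl. unfold Rdiv. ring. }
  rewrite hkL, hkU. unfold cosh_lam.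
  pose proof radius_sq as rr. pose proof radius_pos as r0.
  pose proof (hyp_unit z hz) as hn.
  set (r := horiz_radius a b) in *. set (c := ctr a b) in *.
  apply (Rmult_eq_reg_r (r*r*r*r)); [| apply Rgt_not_eq; repeat apply Rmult_lt_0_compat; lra].
  field_simplify; [| lra | lra].
  replace (r^2) with (c*c - 1) by (rewrite <- rr; ring).
  replace (hyp0 z ^ 2) with (1 + hyp1 z * hyp1 z + hyp2 z * hyp2 z) by (rewrite <- hn; ring).
  ring.
Qed.

(* [cosh] of the length of the shortest broken path L -> z -> U (a lower bound for
   it, in general). *)
Definition detour_cosh (z : pt) : R :=
  cosh_sum (sinh_to_horizontal a (- b) z) (sinh_to_horizontal a b z).

(* The detour estimate: [cosh dP u z >= sqrt (1 + kL^2)] for [u] on L, likewise for U. *)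
Lemma detour_bound u z v :
  on_geodesic (vLR a b) (vLL a b) u -> on_geodesic (vUR a b) (vUL a b) v ->
  in_disc u -> in_disc z -> in_disc v ->
  arccosh (detour_cosh z) <= dP u z + dP z v.
Proof.
  intros hu hv du dz dv.
  assert (sqrt_ge1 : forall k, 1 <= sqrt (1 + k*k)).
  { intros k. rewrite <- sqrt_1 at 1. apply sqrt_le_1_alt. nra. }
  pose proof (horizontal_cosh_bound a (- b) u z ltac:(lra) hu du dz) as BL.
  pose proof (horizontal_cosh_bound a b v z ltac:(lra) hv dv dz) as BU.
  unfold detour_cosh, dP. rewrite <- acosh_cosh_sum, (pfun_sym z v).
  pose proof (acosh_le _ _ (sqrt_ge1 _) BL). pose proof (acosh_le _ _ (sqrt_ge1 _) BU).
  lra.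
Qed.

Lemma path_length_bound g t l : path_LU a b g -> 0 <= t <= 1 -> has_length g l ->
  arccosh (detour_cosh (g t)) <= l.
Proof.
  intros (_ & hq & [hq0 hg0] & [hq1 hg1]) ht [hub _].
  apply Rle_trans with (dP (g 0) (g t) + dP (g t) (g 1)).
  - apply detour_bound; [exact hg0 | exact hg1 | apply hq0 | apply (hq t ht) | apply hq1].
  - apply hub. exists (fun i => match i with O => 0 | 1%nat => t | _ => 1 end), 2%nat.
    split.
    + repeat split. intros i hi. destruct i as [| [| i]]; simpl; lra.
    + simpl. ring.
Qed.

Lemma detour_cosh_bounds z : in_disc z ->
  cosh_lam <= detour_cosh z /\
  cosh_lam * cosh_lam + (cosh_lam * cosh_lam - 1) * (hyp1 z * hyp1 z)
    <= detour_cosh z * detour_cosh z /\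
  (detour_cosh z <= cosh_lam ->
     fst z = 0 /\ 0 <= sinh_to_horizontal a (- b) z * sinh_to_horizontal a b z).
Proof.
  intros hz.
  destruct (cosh_sum_bound _ _ _ _ cosh_lam_gt1 (Rle_0_sqr (hyp1 z))
    (sinh_identity z hz)) as (h1 & h2 & h3).
  split; [exact h1 |]. split; [exact h2 |].
  intros hle. destruct (h3 hle) as [h0 hk]. split; [| exact hk].
  unfold in_disc in hz. unfold Rsqr, hyp1 in h0.
  assert (fst z * fst z = 0).
  { replace (fst z * fst z) with (2 * fst z / (1 - nsq z) * (2 * fst z / (1 - nsq z))
      * ((1 - nsq z) * (1 - nsq z)) / 4) by (field; lra).
    rewrite h0. field. }
  nra.
Qed.

Lemma axis_sign_condition y : in_disc (0, y) ->
  0 <= sinh_to_horizontal a (- b) (0, y) * sinh_to_horizontal a b (0, y) ->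
  - mid_y <= y <= mid_y.
Proof.
  unfold in_disc, nsq; simpl. intros hy hk.
  pose proof radius_pos as r0. pose proof mid_y_bounds as ym.
  rewrite !sinh_to_horizontal_axis, horiz_radius_opp, ctr_opp in hk
    by (try rewrite horiz_radius_opp; lra).
  set (c := ctr a b) in *. set (r := horiz_radius a b) in *.
  assert (hprod : 0 <= (y*y - 2*(-c)*y + 1) * (y*y - 2*c*y + 1)).
  { replace ((y*y - 2*(-c)*y + 1) * (y*y - 2*c*y + 1)) with
      ((y*y - 2*(-c)*y + 1) / ((1 - y*y) * r) * ((y*y - 2*c*y + 1) / ((1 - y*y) * r))
        * (((1 - y*y) * r) * ((1 - y*y) * r))) by (field; nra).
    apply Rmult_le_pos; [exact hk | apply Rle_0_sqr]. }
  assert (hy1 : y < 1) by nra. assert (hy2 : - y < 1) by nra.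
  pose proof ctrU_gt1 as c1; fold c in c1.
  destruct (Rle_or_lt 0 y) as [pos | neg].
  - assert (hq : 0 <= y*y - 2*c*y + 1) by nra.
    apply (quad_nonneg_iff y hy1) in hq. lra.
  - assert (hq : 0 <= (- y)*(- y) - 2*c*(- y) + 1) by nra.
    apply (quad_nonneg_iff (- y) hy2) in hq. lra.
Qed.

Lemma midpoint_U m : hmid a b (vUR a b) (vUL a b) m -> m = (0, mid_y).
Proof.
  intros [[hq hg] e]. assert (hm : in_disc m) by apply hq.
  assert (hv : in_disc (a, b)) by exact hab.
  pose proof (equidistant_on_axis a b m ltac:(lra) hv hm e) as hx.
  pose proof (horizontal_geodesic_eq a b m ltac:(lra) hg) as hl.
  destruct m as [x y]; simpl in *; subst x. unfold in_disc, nsq in *; simpl in *.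
  f_equal. apply quad_root; nra.
Qed.

Lemma midpoint_L m : hmid a b (vLR a b) (vLL a b) m -> m = (0, - mid_y).
Proof.
  intros [[hq hg] e]. assert (hm : in_disc m) by apply hq.
  assert (hv : in_disc (a, - b)) by (unfold in_disc, nsq; simpl; lra).
  pose proof (equidistant_on_axis a (- b) m ltac:(lra) hv hm e) as hx.
  pose proof (horizontal_geodesic_eq a (- b) m ltac:(lra) hg) as hl. rewrite ctr_opp in hl.
  destruct m as [x y]; simpl in *; subst x. unfold in_disc, nsq in *; simpl in *.
  f_equal. rewrite <- (Ropp_involutive y). f_equal.
  apply quad_root; nra.
Qed.

Lemma mid_distance : dP (0, mid_y) (0, - mid_y) = arccosh cosh_lam.
Proof.
  pose proof radius_sq. pose proof radius_pos.
  pose proof mid_y_bounds.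
  assert (e : 1 - mid_y * mid_y = 2 * mid_y * horiz_radius a b)
    by (unfold mid_y in *; nra).
  unfold dP, cosh_lam. f_equal. f_equal. unfold pfun, nsq, sub; simpl.
  replace (- mid_y * - mid_y) with (mid_y * mid_y) by ring.
  replace (0 * 0 + mid_y * mid_y) with (mid_y * mid_y) by ring.
  rewrite e. field. lra.
Qed.

Lemma axis_in_Q y : - mid_y <= y <= mid_y -> quadQ a b (0, y).
Proof.
  intros hy. pose proof mid_y_bounds as ym.
  assert (hU : 2 * (y * ctr a b) <= y*y + 1).
  { pose proof (proj2 (quad_nonneg_iff y ltac:(lra)) ltac:(lra)). lra. }
  assert (hL : 2 * (y * - ctr a b) <= y*y + 1).
  { pose proof (proj2 (quad_nonneg_iff (- y) ltac:(lra)) ltac:(lra)). lra. }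
  repeat split.
  - unfold in_disc, nsq; simpl. nra.
  - intros c r ho h1 h2. pose proof (horizontal_circle a b c r ltac:(lra) ho h1 h2) as ->.
    apply (orth_circle_outside _ r _ ho). unfold nsq; simpl. lra.
  - intros c r ho h1 h2. pose proof (vertical_circle (- a) b c r ltac:(lra) ho h1 h2) as ->.
    apply (orth_circle_outside _ r _ ho). unfold nsq; simpl. nra.
  - intros c r ho h1 h2. pose proof (horizontal_circle a (- b) c r ltac:(lra) ho h2 h1) as ->.
    apply (orth_circle_outside _ r _ ho). unfold nsq; simpl. rewrite ctr_opp. lra.
  - intros c r ho h1 h2. pose proof (vertical_circle a b c r ltac:(lra) ho h2 h1) as ->.
    apply (orth_circle_outside _ r _ ho). unfold nsq; simpl. nra.
Qed.

Definition axis_y (t : R) : R := - mid_y + 2 * mid_y * clamp t.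
Definition axis_path (t : R) : pt := (0, axis_y t).

Lemma axis_y_range t : - mid_y <= axis_y t <= mid_y.
Proof.
  pose proof mid_y_bounds. pose proof (clamp_range t). unfold axis_y. nra.
Qed.

Lemma axis_y_mono s t : s <= t -> axis_y s <= axis_y t.
Proof.
  intros h. pose proof mid_y_bounds. pose proof (clamp_mono s t h).
  unfold axis_y. nra.
Qed.

Lemma axis_y_0 : axis_y 0 = - mid_y.
Proof. unfold axis_y. rewrite clamp_id by lra. ring. Qed.

Lemma axis_y_1 : axis_y 1 = mid_y.
Proof. unfold axis_y. rewrite clamp_id by lra. ring. Qed.

(* Along the axis the distance is additive, so inscribed chord sums telescope. *)
Lemma axis_chord_sum s n : (forall i, (i < n)%nat -> s i <= s (S i)) ->
  chord_sum axis_path s n = axis_potential (axis_y (s n)) - axis_potential (axis_y (s O)).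
Proof.
  pose proof mid_y_bounds.
  induction n as [| n IH]; intros h; simpl; [ring |].
  rewrite IH by (intros; apply h; lia).
  unfold axis_path. rewrite axis_dist.
  - ring.
  - pose proof (axis_y_range (s n)). lra.
  - apply axis_y_mono, h. lia.
  - pose proof (axis_y_range (s (S n))). lra.
Qed.

Lemma axis_potential_span :
  axis_potential (axis_y 1) - axis_potential (axis_y 0) = arccosh cosh_lam.
Proof.
  pose proof mid_y_bounds.
  rewrite axis_y_0, axis_y_1, <- axis_dist by lra.
  unfold dP. rewrite pfun_sym. exact mid_distance.
Qed.

Lemma axis_path_length : has_length axis_path (arccosh cosh_lam).
Proof.
  split.
  - intros x (s & n & (h0 & h1 & h2) & ->).
    rewrite axis_chord_sum, h0, h1, axis_potential_span by exact h2. lra.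
  - intros m hm. apply hm.
    set (ends := fun i : nat => match i with O => 0 | _ => 1 end).
    assert (mono : forall i, (i < 1)%nat -> ends i <= ends (S i))
      by (intros [| i] hi; simpl; lra).
    exists ends, 1%nat. split; [repeat split; exact mono |].
    rewrite axis_chord_sum by exact mono. simpl. rewrite axis_potential_span. reflexivity.
Qed.

Lemma axis_path_cont : cont01 axis_path.
Proof.
  pose proof mid_y_bounds.
  intros t _ e he. exists (e / (2 * mid_y + 1)). split; [apply Rdiv_lt_0_compat; lra |].
  intros s _ hst. unfold axis_path, axis_y, sub, nsq; simpl.
  set (x := 2 * mid_y * (clamp s - clamp t)).
  replace (- mid_y + 2 * mid_y * clamp s - (- mid_y + 2 * mid_y * clamp t))
    with x by (unfold x; ring).
  assert (hx : Rabs x < e).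
  { unfold x. rewrite Rabs_mult, (Rabs_pos_eq (2 * mid_y)) by lra.
    pose proof (clamp_lipschitz s t).
    assert (Rabs (s - t) * (2 * mid_y + 1) < e).
    { apply (Rmult_lt_compat_r (2 * mid_y + 1)) in hst; [| lra].
      unfold Rdiv in hst. rewrite Rmult_assoc, Rinv_l in hst; lra. }
    pose proof (Rabs_pos (s - t)). pose proof (Rabs_pos (clamp s - clamp t)). nra. }
  assert (x * x = Rabs x * Rabs x) by (rewrite <- Rabs_mult, Rabs_pos_eq; nra).
  pose proof (Rabs_pos x). nra.
Qed.

Lemma axis_path_LU : path_LU a b axis_path.
Proof.
  pose proof mid_y_bounds. pose proof radius_sq.
  pose proof radius_pos.
  assert (hc : 2 * b * ctr a b = 1 + a*a + b*b) by (unfold ctr; field; lra).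
  assert (hm : mid_y * mid_y - 2 * ctr a b * mid_y + 1 = 0)
    by (rewrite quad_factor by assumption; ring).
  split; [exact axis_path_cont |].
  split; [intros t _; apply axis_in_Q, axis_y_range |].
  split; split; try apply axis_in_Q, axis_y_range; unfold axis_path.
  - rewrite axis_y_0. exists (0, - ctr a b), (horiz_radius a b).
    unfold orth_circle, on_circle, nsq, sub, vLR, vLL; simpl. repeat split; nra.
  - rewrite axis_y_1. exists (0, ctr a b), (horiz_radius a b).
    unfold orth_circle, on_circle, nsq, sub, vUR, vUL; simpl. repeat split; nra.
Qed.

Lemma length_lower_bound g l : path_LU a b g -> has_length g l ->
  arccosh cosh_lam <= l.
Proof.
  intros hp hl. pose proof (path_length_bound g 0 l hp ltac:(lra) hl).
  destruct hp as (_ & hq & _).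
  destruct (detour_cosh_bounds (g 0)) as (hW & _); [apply (hq 0); lra |].
  pose proof (acosh_le _ _ (Rlt_le _ _ cosh_lam_gt1) hW). lra.
Qed.

Lemma axis_path_shortest : shortest_LU a b axis_path.
Proof.
  split; [exact axis_path_LU |].
  exists (arccosh cosh_lam). split; [exact axis_path_length |].
  exact length_lower_bound.
Qed.

(* A shortest path has length at most that of the axis segment, so every point of it
   attains equality in [detour_cosh_bounds] and therefore lies on the axis segment. *)
Lemma shortest_on_axis g t : shortest_LU a b g -> 0 <= t <= 1 ->
  fst (g t) = 0 /\ - mid_y <= snd (g t) <= mid_y.
Proof.
  intros (hp & l & hl & hmin) ht.
  pose proof (hmin _ _ axis_path_LU axis_path_length).
  pose proof (path_length_bound g t l hp ht hl).
  destruct hp as (_ & hq & _). assert (hz : in_disc (g t)) by apply (hq t ht).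
  destruct (detour_cosh_bounds (g t) hz) as (hW & _ & htight).
  pose proof cosh_lam_gt1.
  destruct htight as [hx hk]; [apply acosh_le_inv; lra |].
  split; [exact hx |].
  destruct (g t) as [x y]; simpl in *; subst x.
  exact (axis_sign_condition y hz hk).
Qed.

Lemma shortest_endpoints g : shortest_LU a b g ->
  snd (g 0) = - mid_y /\ snd (g 1) = mid_y.
Proof.
  intros hs. pose proof hs as ((_ & _ & [[hd0 _] hg0] & [[hd1 _] hg1]) & _).
  destruct (shortest_on_axis g 0 hs ltac:(lra)) as [x0 _].
  destruct (shortest_on_axis g 1 hs ltac:(lra)) as [x1 _].
  pose proof (horizontal_geodesic_eq a (- b) _ ltac:(lra) hg0) as e0.
  pose proof (horizontal_geodesic_eq a b _ ltac:(lra) hg1) as e1.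
  rewrite ctr_opp in e0. unfold in_disc, nsq in *. rewrite x0 in e0, hd0. rewrite x1 in e1, hd1.
  split.
  - rewrite <- (Ropp_involutive (snd (g 0))). f_equal.
    apply quad_root; nra.
  - apply quad_root; nra.
Qed.

Lemma shortest_covers_axis g y : shortest_LU a b g -> - mid_y <= y <= mid_y ->
  exists t, 0 <= t <= 1 /\ g t = (0, y).
Proof.
  intros hs hy. destruct (shortest_endpoints g hs) as [e0 e1].
  pose proof hs as ((hc & _) & _).
  destruct (IVT_cor _ 0 1 (cont01_snd_clamped g y hc) ltac:(lra)) as (t & ht & hft).
  { rewrite !clamp_id by lra. rewrite e0, e1. nra. }
  exists t. split; [exact ht |]. rewrite clamp_id in hft by lra.
  destruct (shortest_on_axis g t hs ht) as [hx _].
  destruct (g t) as [x y']; simpl in *. f_equal; lra.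
Qed.

(* [cosh] of the guaranteed length of a path meeting the left or right side:
   [sqrt (T^2 + (T^2-1) / ctr b a ^2) > T]. *)
Definition side_gap_cosh : R :=
  sqrt (cosh_lam * cosh_lam
        + (cosh_lam * cosh_lam - 1) * (1 / (ctr b a * ctr b a))).

Lemma side_gap_cosh_gt : cosh_lam < side_gap_cosh.
Proof.
  pose proof cosh_lam_gt1 as T1.
  pose proof (ctr_gt1 b a hb ha ltac:(lra)) as d1.
  unfold side_gap_cosh. rewrite <- (sqrt_square cosh_lam) at 1 by lra.
  apply sqrt_lt_1_alt. split; [apply Rle_0_sqr |].
  assert (0 < (cosh_lam * cosh_lam - 1) * (1 / (ctr b a * ctr b a))).
  { apply Rmult_lt_0_compat; [nra | apply Rdiv_lt_0_compat; nra]. }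
  lra.
Qed.

(* Points of the left or right side are far from the axis in the hyperboloid
   coordinate [hyp1], which forces the detour through them to be strictly longer. *)
Lemma side_detour_cosh z : quadQ a b z -> sideLeft a b z \/ sideRight a b z ->
  side_gap_cosh <= detour_cosh z.
Proof.
  intros [hz _] hside.
  pose proof cosh_lam_gt1.
  destruct (detour_cosh_bounds z hz) as (hW & hW2 & _).
  assert (hH : 1 / (ctr b a * ctr b a) <= hyp1 z * hyp1 z).
  { destruct hside as [[_ hg] | [_ hg]].
    - pose proof (vertical_geodesic_eq (- a) b z ltac:(lra) hg) as e.
      rewrite <- (Rmult_opp_opp (ctr b a)), <- ctr_opp.
      exact (hyp1_on_vertical _ z hz e).
    - exact (hyp1_on_vertical _ z hz (vertical_geodesic_eq a b z ltac:(lra) hg)). }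
  unfold side_gap_cosh. rewrite <- (sqrt_square (detour_cosh z)) by lra.
  apply sqrt_le_1_alt.
  assert ((cosh_lam * cosh_lam - 1) * (1 / (ctr b a * ctr b a))
          <= (cosh_lam * cosh_lam - 1) * (hyp1 z * hyp1 z))
    by (apply Rmult_le_compat_l; nra).
  lra.
Qed.

Lemma side_path_gap g t l : path_LU a b g -> 0 <= t <= 1 ->
  sideLeft a b (g t) \/ sideRight a b (g t) -> has_length g l ->
  arccosh side_gap_cosh <= l.
Proof.
  intros hp ht hside hl.
  pose proof (path_length_bound g t l hp ht hl).
  pose proof cosh_lam_gt1. pose proof side_gap_cosh_gt.
  destruct hp as (_ & hq & _).
  pose proof (side_detour_cosh (g t) (hq t ht) hside) as hW.
  apply acosh_le in hW; lra.
Qed.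

End Quadrilateral.

Theorem lemmaL1 (lam eps a b : R) :
  0 < lam -> 0 < eps -> 0 < a -> 0 < b -> a * a + b * b < 1 ->
  (exists mU mL, hmid a b (vUR a b) (vUL a b) mU /\
                 hmid a b (vLR a b) (vLL a b) mL /\ dP mU mL = lam) ->
  (exists mLe mRi, hmid a b (vUL a b) (vLL a b) mLe /\
                   hmid a b (vUR a b) (vLR a b) mRi /\ dP mLe mRi = eps) ->
  (exists y1 y2, y1 <= y2 /\ (exists g, shortest_LU a b g) /\
     forall g, shortest_LU a b g ->
       forall z : pt, (exists t, 0 <= t <= 1 /\ g t = z) <->
                      (fst z = 0 /\ y1 <= snd z <= y2)) /\
  (exists alpha, 0 < alpha /\
     forall g, path_LU a b g ->
       (exists t, 0 <= t <= 1 /\ (sideLeft a b (g t) \/ sideRight a b (g t))) ->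
       forall l, has_length g l -> lam + alpha <= l).
Proof.
  (* The midpoint hypothesis identifies [lam] with [arccosh cosh_lam]; the one on [eps]
     only pins down [a] and [b], which are given here. *)
  intros _ _ ha hb hab (mU & mL & hU & hL & hlam) _.
  rewrite (midpoint_U a b ha hb hab mU hU), (midpoint_L a b ha hb hab mL hL),
    (mid_distance a b ha hb hab) in hlam.
  subst lam. pose proof (mid_y_bounds a b ha hb hab) as ym.
  split.
  - exists (- mid_y a b), (mid_y a b). split; [lra |].
    split; [exists (axis_path a b); exact (axis_path_shortest a b ha hb hab) |].
    intros g hs z. split.
    + intros (t & ht & <-). exact (shortest_on_axis a b ha hb hab g t hs ht).
    + intros [hx hy].
      destruct (shortest_covers_axis a b ha hb hab g (snd z) hs hy) as (t & ht & e).
      exists t. split; [exact ht |]. rewrite e, <- hx. destruct z; reflexivity.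
  - exists (arccosh (side_gap_cosh a b) - arccosh (cosh_lam a b)). split.
    + pose proof (acosh_lt _ _ (Rlt_le _ _ (cosh_lam_gt1 a b ha hb hab))
        (side_gap_cosh_gt a b ha hb hab)). lra.
    + intros g hp (t & ht & hside) l hl.
      pose proof (side_path_gap a b ha hb hab g t l hp ht hside hl). lra.
Qed.
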